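(* Let $P$ be a finite poset and $R$ a consistent restriction function on $P$. Then there is a bijection between the set of meet-irreducible elements of the lattice $\mathrm{Inc}^R(P)$ and the set of pairs $(p,k)$ with $p\in P$ and $k\in R(p)\setminus\{\max R(p)\}$.
   Context: A restriction function assigns to each $p\in P$ a nonempty finite set $R(p)\subseteq\mathbb{Z}$. $\mathrm{Inc}^R(P)$ is the set of $f:P\to\mathbb{Z}$ with $f(p)\in R(p)$ and $p_1<p_2\Rightarrow f(p_1)<f(p_2)$, ordered by $f\le g$ iff $f(p)\le g(p)$ for all $p$; it is a distributive lattice with pointwise min and max as meet and join. An element $x$ is meet-irreducible if it is not the top element and $x=y\wedge z$ implies $x\in\{y,z\}$. $R$ is consistent if for every cover $x\lessdot y$ in $P$, $\min R(x)<\min R(y)$ and $\max R(x)<\max R(y)$. *)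

From mathcomp Require Import all_boot all_order all_algebra.
Set Implicit Arguments. Unset Strict Implicit. Unset Printing Implicit Defensive.
Import Order.TTheory GRing.Theory Num.Theory.

(* A restriction function is R : P -> seq int; R p is read as the finite set of
   its members.  Nonemptiness is a separate hypothesis. *)

Definition seqmax (s : seq int) : int := foldr Num.max (head 0%R s) s.
Definition seqmin (s : seq int) : int := foldr Num.min (head 0%R s) s.

Definition covers (d : Order.disp_t) (P : porderType d) (x y : P) : Prop :=
  (x < y)%O /\ ~ (exists z : P, (x < z)%O /\ (z < y)%O).

Definition consistent (d : Order.disp_t) (P : porderType d) (R : P -> seq int) : Prop :=
  forall x y : P, covers x y ->
    (seqmin (R x) < seqmin (R y))%R /\ (seqmax (R x) < seqmax (R y))%R.

Definition inInc (d : Order.disp_t) (P : porderType d) (R : P -> seq int)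
  (f : P -> int) : Prop :=
  (forall p, f p \in R p) /\ (forall p1 p2 : P, (p1 < p2)%O -> (f p1 < f p2)%R).

Definition leF (T : Type) (f g : T -> int) : Prop := forall p, (f p <= g p)%R.

Definition meetF (T : Type) (f g : T -> int) : T -> int := fun p => Num.min (f p) (g p).

Definition meet_irreducible (d : Order.disp_t) (P : porderType d)
  (R : P -> seq int) (x : P -> int) : Prop :=
  [/\ inInc R x,
      ~ (forall y, inInc R y -> leF y x)
    & forall y z, inInc R y -> inInc R z -> x = meetF y z -> x = y \/ x = z].

(* For k in R(p) the functions f of Inc^R(P) with f(p) <= k form a nonempty (consistency
   provides one taking the value k at p), join-closed and bounded family, hence have a
   greatest element x(p,k).  A meet-irreducible m is the meet of the x(q, m q), q in P, so it
   equals some x(q, m q), and m(q) < max R(q) since m is not the top.  Conversely, when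
   k < max R(p), x(p,k) is meet-irreducible, takes the value k at p, and takes the maximal
   value at every q <> p outside the down-set of p; the latter pins down p.  Hence
   m |-> (p, m p) and (p,k) |-> x(p,k) are mutually inverse. *)
From mathcomp Require Import all_boot all_order all_algebra zify.
From Stdlib Require Import Classical ClassicalEpsilon FunctionalExtensionality ProofIrrelevance.
Set Implicit Arguments. Unset Strict Implicit. Unset Printing Implicit Defensive.
Import Order.TTheory GRing.Theory Num.Theory.
Local Open Scope ring_scope.

Lemma exists_bijective_of_rel (A B : Type) (rel : A -> B -> Prop) :
  (forall a, exists b, rel a b) -> (forall b, exists a, rel a b) ->
  (forall a a' b, rel a b -> rel a' b -> a = a') ->
  (forall a b b', rel a b -> rel a b' -> b = b') ->
  exists f : A -> B, bijective f.
Proof.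
move=> /choice[f relf] /choice[g relg] inj_l inj_r.
by exists f, g => [a | b]; [exact: inj_l (relg _) (relf a) | exact: inj_r (relf _) (relg b)].
Qed.

Section SeqExtrema.

Implicit Types (a r : int) (s : seq int).

Lemma foldr_max_ub a s r : r \in a :: s -> r <= foldr Num.max a s.
Proof.
elim: s r => [|x s IH] r; first by rewrite inE => /eqP->.
rewrite !in_cons /= le_max => /or3P[/eqP-> | /eqP-> | rs].
- by rewrite IH ?mem_head ?orbT.
- by rewrite lexx.
- by rewrite IH ?orbT // in_cons rs orbT.
Qed.

Lemma foldr_max_mem a s : foldr Num.max a s \in a :: s.
Proof.
elim: s => [|x s IH] /=; first exact: mem_head.
rewrite /Num.max; case: ifP => _; rewrite !in_cons ?eqxx ?orbT //.
by move: IH; rewrite in_cons => /orP[-> | ->]; rewrite ?orbT.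
Qed.

Lemma foldr_min_lb a s r : r \in a :: s -> foldr Num.min a s <= r.
Proof.
elim: s r => [|x s IH] r; first by rewrite inE => /eqP->.
rewrite !in_cons /= ge_min => /or3P[/eqP-> | /eqP-> | rs].
- by rewrite IH ?mem_head ?orbT.
- by rewrite lexx.
- by rewrite IH ?orbT // in_cons rs orbT.
Qed.

Lemma foldr_min_mem a s : foldr Num.min a s \in a :: s.
Proof.
elim: s => [|x s IH] /=; first exact: mem_head.
rewrite /Num.min; case: ifP => _; rewrite !in_cons ?eqxx ?orbT //.
by move: IH; rewrite in_cons => /orP[-> | ->]; rewrite ?orbT.
Qed.

Lemma seqmax_ub s r : r \in s -> r <= seqmax s.
Proof. by case: s => // x s rs; apply: foldr_max_ub; rewrite in_cons rs orbT. Qed.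

Lemma seqmax_mem s : s != [::] -> seqmax s \in s.
Proof.
case: s => // x s _; have : seqmax (x :: s) \in x :: x :: s := foldr_max_mem x (x :: s).
by rewrite in_cons => /predU1P[-> |]; rewrite ?mem_head.
Qed.

Lemma seqmin_lb s r : r \in s -> seqmin s <= r.
Proof. by case: s => // x s rs; apply: foldr_min_lb; rewrite in_cons rs orbT. Qed.

Lemma seqmin_mem s : s != [::] -> seqmin s \in s.
Proof.
case: s => // x s _; have : seqmin (x :: s) \in x :: x :: s := foldr_min_mem x (x :: s).
by rewrite in_cons => /predU1P[-> |]; rewrite ?mem_head.
Qed.

Lemma seqmin_le_seqmax s : s != [::] -> seqmin s <= seqmax s.
Proof. by move/seqmin_mem/seqmax_ub. Qed.

End SeqExtrema.

Definition joinF (T : Type) (f g : T -> int) : T -> int := fun p => Num.max (f p) (g p).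

Lemma leF_anti (T : Type) (f g : T -> int) : leF f g -> leF g f -> f = g.
Proof. by move=> fg gf; apply: functional_extensionality => t; apply/eqP; rewrite eq_le fg gf. Qed.

Lemma leq_ltn_sum (I : finType) (F G : I -> nat) i0 :
  (forall i, F i <= G i)%N -> (F i0 < G i0)%N -> (\sum_i F i < \sum_i G i)%N.
Proof.
move=> FG FG0; rewrite (bigD1 i0) // [X in (_ < X)%N](bigD1 i0) //=.
by rewrite -addSn leq_add // leq_sum.
Qed.

Lemma exists_greatest (T : finType) (S : (T -> int) -> Prop) (M : T -> int) f0 :
  (forall f, S f -> leF f M) -> (forall f g, S f -> S g -> S (joinF f g)) ->
  S f0 -> exists2 x, S x & forall f, S f -> leF f x.
Proof.
move=> S_le_M S_join.
pose mu f := (\sum_t `|M t - f t|)%N.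
have [n] := ubnP (mu f0); elim: n f0 => // n IH f0 /ltnSE mu_f0 Sf0.
have [f0_max | f0_not_max] := classic (forall f, S f -> leF f f0); first by exists f0.
have [f Sf [t0 lt_t0]] : exists2 f, S f & exists t, f0 t < f t.
  apply: NNPP => none; apply: f0_not_max => f Sf t; rewrite leNgt.
  by apply/negP => lt_t; apply: none; exists f => //; exists t.
apply: (IH (joinF f0 f)); last exact: S_join.
have dist_le (t : T) : (f0 t <= M t) /\ (f t <= M t).
  by split; [exact: S_le_M Sf0 t | exact: S_le_M Sf t].
apply: leq_trans mu_f0; apply: (leq_ltn_sum (i0 := t0)) => [t|].
  by have := dist_le t; rewrite /joinF /Num.max; case: ifP; lia.
by have := dist_le t0; rewrite /joinF /Num.max lt_t0; lia.
Qed.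

Lemma lt_ind_covers (d : Order.disp_t) (T : finPOrderType d) (r : T -> T -> Prop) :
  (forall x y z, r x y -> r y z -> r x z) -> (forall x y, covers x y -> r x y) ->
  forall x y, (x < y)%O -> r x y.
Proof.
move=> r_trans r_covers x y.
pose between a b := [pred z : T | (a < z < b)%O].
have [n] := ubnP #|between x y|; elim: n x y => // n IH x y /ltnSE size_xy lt_xy.
case: (pickP (between x y)) => [z /andP[lt_xz lt_zy] | none]; last first.
  by apply: r_covers; split=> // -[z [lt_xz lt_zy]]; have := none z; rewrite /= lt_xz lt_zy.
apply: r_trans (IH x z _ lt_xz) (IH z y _ lt_zy);
  apply: leq_trans size_xy; apply: proper_card; apply/properP;
  (split; last by exists z; rewrite !inE ?lt_xz ?lt_zy ?ltxx ?andbF);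
  apply/subsetP => w; rewrite !inE => /andP[lt_1 lt_2].
- by rewrite lt_1 (lt_trans lt_2 lt_zy).
- by rewrite lt_2 (lt_trans lt_xz lt_1).
Qed.

Section Inc.

Variables (d : Order.disp_t) (P : porderType d) (R : P -> seq int).

Definition inc_top : P -> int := fun q => seqmax (R q).

Definition pin (p : P) (k : int) : P -> int :=
  fun q => if q == p then k else if (p < q)%O then seqmax (R q) else seqmin (R q).

Definition greatest_below (p : P) (k : int) (x : P -> int) : Prop :=
  [/\ inInc R x, x p <= k & forall f, inInc R f -> f p <= k -> leF f x].

Lemma inInc_meetF f g : inInc R f -> inInc R g -> inInc R (meetF f g).
Proof.
move=> [fR f_lt] [gR g_lt]; split=> [q | q1 q2 lt12]; rewrite /meetF.
  by rewrite /Num.min; case: ifP.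
by rewrite lt_min !gt_min f_lt ?g_lt ?orbT.
Qed.

Lemma inInc_joinF f g : inInc R f -> inInc R g -> inInc R (joinF f g).
Proof.
move=> [fR f_lt] [gR g_lt]; split=> [q | q1 q2 lt12]; rewrite /joinF.
  by rewrite /Num.max; case: ifP.
by rewrite gt_max !lt_max f_lt ?g_lt ?orbT.
Qed.

Lemma inInc_bounds f q : inInc R f -> seqmin (R q) <= f q <= seqmax (R q).
Proof. by move=> [fR _]; rewrite seqmin_lb ?seqmax_ub. Qed.

Lemma leF_inc_top f : inInc R f -> leF f inc_top.
Proof. by move=> fI q; case/andP: (inInc_bounds q fI). Qed.

Lemma greatest_below_unique p k x y :
  greatest_below p k x -> greatest_below p k y -> x = y.
Proof. by move=> [xI xp x_max] [yI yp y_max]; apply: leF_anti; [apply: y_max | apply: x_max]. Qed.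

End Inc.

Section Consistent.

Variables (d : Order.disp_t) (P : finPOrderType d) (R : P -> seq int).
Hypotheses (HR : forall p, R p != [::]) (Hc : consistent R).

Lemma consistent_lt p q : (p < q)%O ->
  seqmin (R p) < seqmin (R q) /\ seqmax (R p) < seqmax (R q).
Proof.
move: p q; apply: lt_ind_covers => [x y z [min_xy max_xy] [min_yz max_yz] | x y /Hc //].
by split; [apply: lt_trans min_yz | apply: lt_trans max_yz].
Qed.

Lemma inInc_top : inInc R (inc_top R).
Proof. by split=> [q | q1 q2 /consistent_lt[]]; first exact: seqmax_mem. Qed.

Lemma inInc_pin p k : k \in R p -> inInc R (pin R p k).
Proof.
move=> kR; split=> [q | q1 q2 lt12]; rewrite /pin.
  by case: eqP => [-> // | _]; case: ifP => _; [apply: seqmax_mem | apply: seqmin_mem].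
have [min_lt max_lt] := consistent_lt lt12.
have [eq1 | q1p] := eqVneq q1 p.
  by subst q1; rewrite gt_eqF // lt12 (le_lt_trans (seqmax_ub kR)).
have [eq2 | q2p] := eqVneq q2 p.
  by subst q2; rewrite (lt_gtF lt12) (lt_le_trans min_lt (seqmin_lb kR)).
case: ifP => [lt_p1 | _]; first by rewrite (lt_trans lt_p1 lt12).
by case: ifP => // _; apply: lt_le_trans min_lt (seqmin_le_seqmax (HR q2)).
Qed.

Lemma exists_greatest_below p k : k \in R p -> exists x, greatest_below R p k x.
Proof.
move=> kR; pose S f := inInc R f /\ f p <= k.
have [x [xI xp] x_max] : exists2 x, S x & forall f, S f -> leF f x.
  apply: (@exists_greatest P S (inc_top R) (pin R p k)).
  - by move=> f [fI _]; apply: leF_inc_top.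
  - by move=> f g [fI fp] [gI gp]; split; [apply: inInc_joinF | rewrite /joinF ge_max fp gp].
  - by split; [apply: inInc_pin | rewrite /pin eqxx].
by exists x; split=> // f fI fp; apply: x_max.
Qed.

Lemma greatest_below_at p k x : k \in R p -> greatest_below R p k x -> x p = k.
Proof.
move=> kR [_ xp x_max]; apply/eqP; rewrite eq_le xp.
by have := x_max _ (inInc_pin kR) _ p; rewrite /pin eqxx; apply.
Qed.

Lemma greatest_below_meet_irreducible p k x : k \in R p -> k != seqmax (R p) ->
  greatest_below R p k x -> meet_irreducible R x.
Proof.
move=> kR kM [xI xp x_max]; split=> // [x_top | y z yI zI x_yz].
  have := x_top _ inInc_top p; rewrite /inc_top => max_le_xp.
  by move: kM; rewrite eq_le seqmax_ub // (le_trans max_le_xp xp).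
have x_le_y : leF x y by rewrite x_yz => q; rewrite /meetF ge_min lexx.
have x_le_z : leF x z by rewrite x_yz => q; rewrite /meetF ge_min lexx orbT.
have : x p = meetF y z p by rewrite -x_yz.
rewrite /meetF /Num.min; case: ifP => _ xp_eq; [left | right];
  by apply: leF_anti => //; apply: x_max; rewrite // -xp_eq.
Qed.

(* [pin R q (seqmax (R q))] takes its least value at [p], so its join with [x] lies below [x]. *)
Lemma greatest_below_off p k x q : greatest_below R p k x ->
  q != p -> ~~ (q < p)%O -> x q = seqmax (R q).
Proof.
move=> [xI xp x_max] qp not_lt_qp.
have pinI := inInc_pin (seqmax_mem (HR q)).
have : leF (joinF x (pin R q (seqmax (R q)))) x.
  apply: x_max; first exact: inInc_joinF.
  rewrite /joinF /pin eq_sym (negbTE qp) (negbTE not_lt_qp) ge_max xp.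
  by case/andP: (inInc_bounds p xI) => min_le _; rewrite (le_trans min_le xp).
move=> /(_ q); rewrite /joinF /pin eqxx ge_max => /andP[_ max_le].
by apply/eqP; rewrite eq_le max_le (leF_inc_top xI).
Qed.

Lemma greatest_below_inj p k p' k' x :
  k \in R p -> k != seqmax (R p) -> k' \in R p' -> k' != seqmax (R p') ->
  greatest_below R p k x -> greatest_below R p' k' x -> (p, k) = (p', k').
Proof.
move=> kR kM k'R k'M G G'.
have xp := greatest_below_at kR G; have xp' := greatest_below_at k'R G'.
have [eq_pp' | ne_pp'] := eqVneq p p'; first by subst p'; rewrite -xp -xp'.
have [lt_p'p | not_lt_p'p] := boolP (p' < p)%O.
  by move: kM; rewrite -xp (greatest_below_off G' ne_pp' (negbT (lt_gtF lt_p'p))) eqxx.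
by move: k'M; rewrite -xp' (greatest_below_off G _ not_lt_p'p) ?eqxx // eq_sym.
Qed.

Lemma meet_irreducible_greatest_below m : meet_irreducible R m ->
  exists p, greatest_below R p (m p) m /\ m p != seqmax (R p).
Proof.
move=> [mI m_not_top m_irr].
have [X XG] : exists X : P -> P -> int, forall q, greatest_below R q (m q) (X q).
  apply: (choice (fun q => greatest_below R q (m q))) => q.
  by apply: exists_greatest_below; case: mI.
have XI q : inInc R (X q) by case: (XG q).
pose meetX := foldr (fun q => meetF (X q)) (inc_top R).
have meetXI s : inInc R (meetX s).
  by elim: s => [|q s IH]; [apply: inInc_top | apply: inInc_meetF].
have m_meetX : m = meetX (enum P).
  apply: leF_anti => q.
    elim: (enum P) => [|q' s IH] /=; first exact: leF_inc_top.
    by rewrite /meetF le_min IH andbT; case: (XG q') => _ _; apply.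
  have : q \in enum P by rewrite mem_enum.
  elim: (enum P) => // q' s IH; rewrite in_cons /= /meetF ge_min.
  by case/predU1P=> [<- | /IH ->]; rewrite ?orbT //; case: (XG q) => _ ->.
have [q m_Xq] : exists q, m = X q.
  elim: (enum P) m_meetX => [|q s IH] /= m_eq.
    by case: m_not_top => y yI; rewrite m_eq; apply: leF_inc_top.
  by case: (m_irr _ _ (XI q) (meetXI s) m_eq) => [-> | /IH]; [exists q |].
have Gq : greatest_below R q (m q) m by rewrite {2}m_Xq.
exists q; split=> //; apply/eqP => mq_max; apply: m_not_top => y yI.
by case: Gq => _ _; apply=> //; rewrite mq_max; case/andP: (inInc_bounds q yI).
Qed.

End Consistent.

Theorem proposition2p9 (d : Order.disp_t) (P : finPOrderType d)
  (R : P -> seq int) (HR : forall p, R p != [::]) (Hc : consistent R) :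
  exists phi : {x : P -> int | meet_irreducible R x} ->
               {pk : P * int | pk.2 \in R pk.1 /\ pk.2 != seqmax (R pk.1)},
    bijective phi.
Proof.
pose Pairs := {pk : P * int | pk.2 \in R pk.1 /\ pk.2 != seqmax (R pk.1)}.
pose rel (m : {x : P -> int | meet_irreducible R x}) (pk : Pairs) :=
  greatest_below R (sval pk).1 (sval pk).2 (sval m).
apply: (exists_bijective_of_rel (rel := rel)).
- move=> [m mMI] /=; have [p [Gp mpM]] := meet_irreducible_greatest_below HR Hc mMI.
  have mpR : m p \in R p by case: mMI => -[].
  by exists (exist _ (p, m p) (conj mpR mpM)).
- move=> [[p k] [kR kM]] /=; have [x Gx] := exists_greatest_below HR Hc kR.
  by exists (exist _ x (greatest_below_meet_irreducible HR Hc kR kM Gx)).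
- move=> [m ?] [m' ?] pk /= G G'; apply: subset_eq_compat.
  exact: greatest_below_unique G G'.
- move=> [m ?] [[p k] /= [kR kM]] [[p' k'] /= [k'R k'M]]; rewrite /rel /= => G G'.
  apply: subset_eq_compat.
  exact (greatest_below_inj HR Hc kR kM k'R k'M G G').
Qed.
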